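(* Let $\beta>0$ and $f\in\mathcal H_B^\beta$, and let $a=a(\beta)>0$ be any constant satisfying $(e^a-1)+a^\beta/(\lfloor\beta\rfloor!)\le1/2$. Then for all $x\in[0,1]$ and $h$ with $x+h\in[0,1]$ and $$|h|\le a\Big(\frac{\min(f(x),1-f(x))}{\|f\|_{\mathcal H_B^\beta}}\Big)^{1/\beta},$$ we have $$|f(x+h)-f(x)|=|(1-f(x))-(1-f(x+h))|\le\tfrac12\min(f(x),1-f(x)),$$ and in particular $$\tfrac14f(x)(1-f(x))\le f(x+h)(1-f(x+h))\le\tfrac94f(x)(1-f(x)).$$
   Context: For $\beta>0$, $\lfloor\beta\rfloor$ is the greatest integer strictly smaller than $\beta$. $\|f\|_{C^\beta([0,1])}=\|f\|_\infty+\|f^{(\lfloor\beta\rfloor)}\|_\infty+\sup_{x\ne y}|f^{(\lfloor\beta\rfloor)}(x)-f^{(\lfloor\beta\rfloor)}(y)|/|x-y|^{\beta-\lfloor\beta\rfloor}$. For a function $g$, $|g|_{\mathcal H^\beta}=\max_{1\le j<\beta}\big(\sup_{x\in[0,1]}|g^{(j)}(x)|^\beta/|g(x)|^{\beta-j}\big)^{1/j}$, with $0/0:=0$ and $|g|_{\mathcal H^\beta}=0$ if $\beta\le1$. $\mathcal H_B^\beta=\{f:[0,1]\to[0,1]:\ \|f\|_{\mathcal H_B^\beta}:=\|f\|_{C^\beta([0,1])}+|f|_{\mathcal H^\beta}+|1-f|_{\mathcal H^\beta}<\infty\}$. *)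

From Stdlib Require Import Reals List ClassicalEpsilon Factorial.
From Coquelicot Require Import Coquelicot.
Open Scope R_scope.

(* x^y for x >= 0 with the convention 0^y = 0 (y > 0 in all uses). *)
Definition rpow (x y : R) : R :=
  if Req_EM_T x 0 then 0 else Rpower x y.

Definition is_deriv_01 (g g' : R -> R) : Prop :=
  forall x, 0 <= x <= 1 ->
    filterlim (fun y => (g y - g x) / (y - x))
      (within (fun y => 0 <= y <= 1 /\ y <> x) (locally x))
      (locally (g' x)).

Definition deriv_chain (g : R -> R) (D : nat -> R -> R) (m : nat) : Prop :=
  (forall x, 0 <= x <= 1 -> D 0%nat x = g x) /\
  (forall j, (j < m)%nat -> is_deriv_01 (D j) (D (S j))).

Definition sup01 (F : R -> R) : Rbar :=
  Lub_Rbar (fun r => exists x, 0 <= x <= 1 /\ r = F x).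

(* ||g||_{C^beta([0,1])}, with D the derivative chain of g, m = floor beta *)
Definition Cbeta_norm (beta : R) (m : nat) (D : nat -> R -> R) : Rbar :=
  Rbar_plus (sup01 (fun x => Rabs (D 0%nat x)))
   (Rbar_plus (sup01 (fun x => Rabs (D m x)))
      (Lub_Rbar (fun r => exists x y, 0 <= x <= 1 /\ 0 <= y <= 1 /\ x <> y /\
          r = Rabs (D m x - D m y) / Rpower (Rabs (x - y)) (beta - INR m)))).

(* sup_x |g^(j)(x)|^beta / |g(x)|^(beta-j), with 0/0 := 0 and c/0 := +oo for c<>0 *)
Definition Hterm_sup (beta : R) (D : nat -> R -> R) (j : nat) : Rbar :=
  if excluded_middle_informative
       (exists x, 0 <= x <= 1 /\ D 0%nat x = 0 /\ D j x <> 0)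
  then p_infty
  else Lub_Rbar (fun r => r = 0 \/ exists x, 0 <= x <= 1 /\ D 0%nat x <> 0 /\
          r = rpow (Rabs (D j x)) beta / rpow (Rabs (D 0%nat x)) (beta - INR j)).

Definition Rbar_maxb (u v : Rbar) : Rbar :=
  if excluded_middle_informative (Rbar_le u v) then v else u.

Definition Rbar_root (s : Rbar) (j : nat) : Rbar :=
  match s with
  | Finite r => Finite (rpow r (/ INR j))
  | p_infty => p_infty
  | m_infty => Finite 0
  end.

(* |g|_{H^beta} = max_{1 <= j < beta} (sup ...)^{1/j}; it is 0 if beta <= 1 (m = 0) *)
Definition H_seminorm (beta : R) (m : nat) (D : nat -> R -> R) : Rbar :=
  fold_right Rbar_maxb (Finite 0)
    (map (fun j => Rbar_root (Hterm_sup beta D j) j) (seq 1 m)).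

(* ||f||_{H_B^beta}, D derivative chain of f, E derivative chain of 1 - f *)
Definition HB_norm (beta : R) (m : nat) (D E : nat -> R -> R) : Rbar :=
  Rbar_plus (Cbeta_norm beta m D)
    (Rbar_plus (H_seminorm beta m D) (H_seminorm beta m E)).

From Stdlib Require Import Reals List ClassicalEpsilon Factorial Lra Lia.
From Coquelicot Require Import Coquelicot.
Open Scope R_scope.

(* Let F be whichever of f, 1 - f is smaller at x, y = F(x) and N the H_B^beta
   norm. Taylor's formula of order m = floor(beta), whose remainder is
   controlled by the Hoelder seminorm, gives
     |F(x+h) - F(x)| <= sum_{1<=j<=m} |F^(j)(x)| |h|^j / j! + N |h|^beta / m!.
   The H^beta seminorm bounds |F^(j)(x)| by N^(j/beta) y^(1-j/beta), so under
   |h| <= a (y/N)^(1/beta) the j-th term is at most y a^j / j! and the remainder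
   at most y a^beta / m!; hence the increment is at most
   y ((e^a - 1) + a^beta / m!) <= y / 2. The bounds on f(1-f) follow. *)

(** * Derivatives relative to [0, 1] *)

Lemma ball_Rabs x e y : ball x e y <-> Rabs (y - x) < e.
Proof. reflexivity. Qed.

Lemma is_deriv_01_is_derive g g' s :
  is_deriv_01 g g' -> 0 < s < 1 -> is_derive g s (g' s).
Proof.
  intros Hd Hs. apply is_derive_Reals. intros eps Heps.
  destruct (Hd s ltac:(lra) (ball (g' s) eps)) as [d Hd'].
  { exists (mkposreal eps Heps). auto. }
  assert (Hpos : 0 < Rmin d (Rmin s (1 - s))).
  { apply Rmin_pos; [apply cond_pos | apply Rmin_pos; lra]. }
  exists (mkposreal _ Hpos). intros k Hk0 Hk. simpl in Hk.
  pose proof (Rmin_l d (Rmin s (1 - s))). pose proof (Rmin_r d (Rmin s (1 - s))).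
  pose proof (Rmin_l s (1 - s)). pose proof (Rmin_r s (1 - s)).
  apply Rabs_def2 in Hk.
  assert (Hb : ball s d (s + k)) by (apply ball_Rabs; rewrite Rplus_minus_l, Rabs_lt_between; lra).
  specialize (Hd' _ Hb ltac:(split; lra)). apply ball_Rabs in Hd'.
  now rewrite Rplus_minus_l in Hd'.
Qed.

Definition continuous_within (p q : R) (g : R -> R) (t : R) : Prop :=
  forall eps, 0 < eps -> exists d, 0 < d /\
    forall y, p <= y <= q -> Rabs (y - t) < d -> Rabs (g y - g t) < eps.

Lemma continuous_within_subinterval p q p' q' g t :
  p' <= p -> q <= q' -> continuous_within p' q' g t -> continuous_within p q g t.
Proof.
  intros Hp Hq Hc eps Heps. destruct (Hc eps Heps) as [d [Hd Hy]].
  exists d. split; auto. intros y Hyi. apply Hy. lra.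
Qed.

Lemma is_derive_continuous_within p q g t l :
  is_derive g t l -> continuous_within p q g t.
Proof.
  intros H eps Heps.
  assert (Hc : continuity_pt g t).
  { apply derivable_continuous_pt. exists l. now apply is_derive_Reals. }
  destruct (Hc eps Heps) as [d [Hd Hy]].
  exists d. split; auto. intros y _ Hyt.
  destruct (Req_dec y t) as [->|Hne]; [rewrite Rminus_eq_0, Rabs_R0; lra|].
  apply (Hy y). split; [split; [exact I | auto] | exact Hyt].
Qed.

Lemma continuous_within_plus p q u v t :
  continuous_within p q u t -> continuous_within p q v t ->
  continuous_within p q (fun y => u y + v y) t.
Proof.
  intros Hu Hv eps Heps.
  destruct (Hu (eps / 2)) as [d1 [Hd1 H1]]; [lra|].
  destruct (Hv (eps / 2)) as [d2 [Hd2 H2]]; [lra|].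
  exists (Rmin d1 d2). split; [now apply Rmin_pos|].
  intros y Hy Hyt. pose proof (Rmin_l d1 d2). pose proof (Rmin_r d1 d2).
  specialize (H1 y Hy ltac:(lra)). specialize (H2 y Hy ltac:(lra)).
  replace (u y + v y - (u t + v t)) with ((u y - u t) + (v y - v t)) by ring.
  eapply Rle_lt_trans; [apply Rabs_triang | lra].
Qed.

Lemma continuous_within_scal p q c u t :
  continuous_within p q u t -> continuous_within p q (fun y => c * u y) t.
Proof.
  intros Hu eps Heps.
  assert (Hc : 0 < Rabs c + 1) by (pose proof (Rabs_pos c); lra).
  destruct (Hu (eps / (Rabs c + 1))) as [d [Hd Hy]]; [now apply Rdiv_lt_0_compat|].
  exists d. split; auto. intros y Hyi Hyt.
  rewrite <- Rmult_minus_distr_l, Rabs_mult.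
  specialize (Hy y Hyi Hyt).
  apply Rle_lt_trans with ((Rabs c + 1) * Rabs (u y - u t)).
  - apply Rmult_le_compat_r; [apply Rabs_pos | lra].
  - apply Rmult_lt_compat_l with (r := Rabs c + 1) in Hy; auto.
    now replace ((Rabs c + 1) * (eps / (Rabs c + 1))) with eps in Hy by (field; lra).
Qed.

Lemma continuous_within_minus p q u v t :
  continuous_within p q u t -> continuous_within p q v t ->
  continuous_within p q (fun y => u y - v y) t.
Proof.
  intros Hu Hv eps Heps.
  destruct (continuous_within_plus p q u (fun y => -1 * v y) t Hu
              (continuous_within_scal p q (-1) v t Hv) eps Heps) as [d [Hd Hy]].
  exists d. split; auto. intros y Hyi Hyt.
  replace (u y - v y - (u t - v t)) with (u y + -1 * v y - (u t + -1 * v t)) by ring.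
  now apply Hy.
Qed.

Lemma is_deriv_01_continuous_within g g' t :
  is_deriv_01 g g' -> 0 <= t <= 1 -> continuous_within 0 1 g t.
Proof.
  intros Hd Ht eps Heps.
  destruct (Hd t Ht (ball (g' t) 1)) as [d Hd'].
  { exists (mkposreal 1 Rlt_0_1). auto. }
  set (M := Rabs (g' t) + 1).
  assert (HM : 0 < M) by (unfold M; pose proof (Rabs_pos (g' t)); lra).
  assert (Hpos : 0 < Rmin d (eps / M)).
  { apply Rmin_pos; [apply cond_pos | now apply Rdiv_lt_0_compat]. }
  exists (Rmin d (eps / M)). split; auto. intros y Hy Hyt.
  pose proof (Rmin_l d (eps / M)). pose proof (Rmin_r d (eps / M)).
  destruct (Req_dec y t) as [->|Hne]; [rewrite Rminus_eq_0, Rabs_R0; lra|].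
  assert (Hq : Rabs ((g y - g t) / (y - t)) <= M).
  { assert (Hb : ball t d y) by (apply ball_Rabs; lra).
    specialize (Hd' _ Hb (conj Hy Hne)). change (Rabs ((g y - g t) / (y - t) - g' t) < 1) in Hd'.
    pose proof (Rabs_triang_inv ((g y - g t) / (y - t)) (g' t)). unfold M. lra. }
  assert (Hyt0 : 0 < Rabs (y - t)) by (apply Rabs_pos_lt; lra).
  replace (g y - g t) with ((g y - g t) / (y - t) * (y - t)) by (field; lra).
  rewrite Rabs_mult.
  apply Rle_lt_trans with (M * Rabs (y - t)); [apply Rmult_le_compat_r; lra|].
  assert (Hlt : Rabs (y - t) < eps / M) by lra.
  apply Rmult_lt_compat_l with (r := M) in Hlt; auto.
  now replace (M * (eps / M)) with eps in Hlt by (field; lra).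
Qed.

Lemma within_01_proper x : 0 <= x <= 1 ->
  ProperFilter' (within (fun y => 0 <= y <= 1 /\ y <> x) (locally x)).
Proof.
  intros Hx. split; [|apply within_filter, locally_filter].
  intros [d Hd]. pose proof (cond_pos d).
  pose proof (Rmin_l (d / 2) (1 / 2)). pose proof (Rmin_r (d / 2) (1 / 2)).
  assert (He : 0 < Rmin (d / 2) (1 / 2)) by (apply Rmin_pos; lra).
  set (e := Rmin (d / 2) (1 / 2)) in *.
  destruct (Rle_dec x (1 / 2)).
  - apply (Hd (x + e)); [|split; lra].
    apply ball_Rabs. rewrite Rplus_minus_l, Rabs_pos_eq; lra.
  - apply (Hd (x - e)); [|split; lra].
    apply ball_Rabs. replace (x - e - x) with (- e) by ring.
    rewrite Rabs_Ropp, Rabs_pos_eq; lra.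
Qed.

Lemma is_deriv_01_const_minus u u' v v' c :
  is_deriv_01 u u' -> is_deriv_01 v v' ->
  (forall z, 0 <= z <= 1 -> u z = c - v z) ->
  forall z, 0 <= z <= 1 -> u' z = - v' z.
Proof.
  intros Hu Hv Huv z Hz.
  pose proof (within_01_proper z Hz).
  apply (filterlim_locally_unique (fun y => (u y - u z) / (y - z))); [exact (Hu z Hz)|].
  eapply filterlim_ext_loc;
    [|exact (filterlim_comp _ _ _ _ opp _ _ _ (Hv z Hz) (filterlim_opp (v' z)))].
  unfold within. apply filter_forall. intros y [Hy Hne].
  rewrite (Huv y Hy), (Huv z Hz). unfold opp; simpl. field. lra.
Qed.

Lemma deriv_chain_one_minus f D E m :
  deriv_chain f D m -> deriv_chain (fun x => 1 - f x) E m ->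
  forall j, (j <= m)%nat -> exists c, forall z, 0 <= z <= 1 -> E j z = c - D j z.
Proof.
  intros [HD0 HDd] [HE0 HEd]. induction j as [|j IHj]; intros Hj.
  - exists 1. intros z Hz. now rewrite HE0, HD0.
  - destruct (IHj ltac:(lia)) as [c Hc].
    exists 0. intros z Hz. rewrite Rminus_0_l.
    exact (is_deriv_01_const_minus _ _ _ _ c (HEd j ltac:(lia)) (HDd j ltac:(lia)) Hc z Hz).
Qed.

(** * A comparison principle *)

Definition clamp (p q t : R) : R := Rmax p (Rmin q t).

Lemma clamp_between p q t : p <= q -> p <= clamp p q t <= q.
Proof. unfold clamp, Rmax, Rmin; intros; repeat destruct Rle_dec; lra. Qed.

Lemma clamp_id p q t : p <= t <= q -> clamp p q t = t.
Proof. unfold clamp, Rmax, Rmin; intros; repeat destruct Rle_dec; lra. Qed.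

Lemma clamp_dist p q t c : p <= q -> p <= c <= q -> Rabs (clamp p q t - c) <= Rabs (t - c).
Proof.
  unfold clamp, Rmax, Rmin; intros; repeat destruct Rle_dec;
    unfold Rabs; repeat destruct Rcase_abs; lra.
Qed.

(* Composing with [clamp p q] turns continuity within [p, q] into continuity
   on all of R, as required by [MVT_gen]; the derivative is replaced by
   [Rmax 0 g'] since the mean-value point may be an endpoint. *)
Lemma nondecreasing_of_derive_nonneg (g g' : R -> R) (p q : R) :
  p < q ->
  (forall t, p <= t <= q -> continuous_within p q g t) ->
  (forall s, p < s < q -> is_derive g s (g' s) /\ 0 <= g' s) ->
  g p <= g q.
Proof.
  intros Hpq Hc Hd.
  destruct (MVT_gen (fun t => g (clamp p q t)) p q (fun s => Rmax 0 (g' s)))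
    as [c [_ Hmvt]];
    rewrite ?Rmin_left, ?Rmax_right by lra.
  - intros s Hs. destruct (Hd s Hs) as [Hds Hpos]. rewrite Rmax_right by lra.
    apply (is_derive_ext_loc g); [|exact Hds].
    assert (Hr : 0 < Rmin (s - p) (q - s)) by (apply Rmin_pos; lra).
    exists (mkposreal _ Hr). intros t Ht.
    assert (Hts : Rabs (t - s) < Rmin (s - p) (q - s)) by exact Ht.
    apply Rabs_lt_between in Hts.
    pose proof (Rmin_l (s - p) (q - s)). pose proof (Rmin_r (s - p) (q - s)).
    rewrite clamp_id; lra.
  - intros c Hc0 eps Heps. destruct (Hc c Hc0 eps Heps) as [d [Hd0 Hd1]].
    exists d. split; auto. intros t [_ Ht]. simpl in Ht |- *. unfold Rdist in *.
    rewrite (clamp_id p q c) by lra.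
    apply Hd1; [apply clamp_between; lra|].
    eapply Rle_lt_trans; [apply clamp_dist; lra | exact Ht].
  - rewrite (clamp_id p q p), (clamp_id p q q) in Hmvt by lra.
    pose proof (Rmax_l 0 (g' c)).
    assert (0 <= Rmax 0 (g' c) * (q - p)) by (apply Rmult_le_pos; lra). lra.
Qed.

Lemma Rabs_increment_le_of_derive (u u' psi psi' : R -> R) (p q : R) :
  p < q ->
  (forall t, p <= t <= q -> continuous_within p q u t) ->
  (forall s, p < s < q -> is_derive u s (u' s)) ->
  (forall s, is_derive psi s (psi' s)) ->
  (forall s, p < s < q -> Rabs (u' s) <= psi' s) ->
  Rabs (u q - u p) <= psi q - psi p.
Proof.
  intros Hpq Hu Hu' Hpsi Hb.
  assert (Hmono : forall sg, Rabs sg = 1 ->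
    psi p + sg * u p <= psi q + sg * u q).
  { intros sg Hsg. apply (nondecreasing_of_derive_nonneg (fun y => psi y + sg * u y)
      (fun s => psi' s + sg * u' s)); auto.
    - intros t Ht. apply continuous_within_plus;
        [eapply is_derive_continuous_within, Hpsi | now apply continuous_within_scal, Hu].
    - intros s Hs. split; [apply (is_derive_plus psi), is_derive_scal; auto|].
      specialize (Hb s Hs).
      assert (Hsu : Rabs (sg * u' s) = Rabs (u' s)) by now rewrite Rabs_mult, Hsg, Rmult_1_l.
      assert (Hb' : Rabs (sg * u' s) <= psi' s) by lra.
      apply Rabs_le_between in Hb'. lra. }
  pose proof (Hmono 1 Rabs_R1). pose proof (Hmono (-1) ltac:(rewrite Rabs_left; lra)).
  apply Rabs_le. lra.
Qed.

Lemma Rabs_increment_le_of_derive_between (u u' psi psi' : R -> R) (p q : R) :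
  (forall t, Rmin p q <= t <= Rmax p q -> continuous_within (Rmin p q) (Rmax p q) u t) ->
  (forall s, Rmin p q < s < Rmax p q -> is_derive u s (u' s)) ->
  (forall s, is_derive psi s (psi' s)) ->
  (forall s, Rmin p q < s < Rmax p q -> Rabs (u' s) <= psi' s) ->
  Rabs (u q - u p) <= Rabs (psi q - psi p).
Proof.
  intros Hu Hu' Hpsi Hb.
  destruct (Rtotal_order p q) as [Hlt|[->|Hgt]].
  - rewrite Rmin_left, Rmax_right in * by lra.
    eapply Rle_trans; [apply (Rabs_increment_le_of_derive u u' psi psi'); auto | apply Rle_abs].
  - rewrite !Rminus_eq_0, Rabs_R0. lra.
  - rewrite Rmin_right, Rmax_left in * by lra.
    rewrite Rabs_minus_sym, (Rabs_minus_sym (psi q)).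
    eapply Rle_trans; [apply (Rabs_increment_le_of_derive u u' psi psi'); auto | apply Rle_abs].
Qed.

(** * Taylor's formula with a Hoelder remainder *)

Definition taylor_poly (c : nat -> R) (n : nat) (u : R) : R :=
  sum_f_R0 (fun i => c i * u ^ i / INR (fact i)) n.

Lemma taylor_poly_ext c c' n u :
  (forall i, (i <= n)%nat -> c i = c' i) -> taylor_poly c n u = taylor_poly c' n u.
Proof. intros H. apply sum_eq. intros i Hi. now rewrite H. Qed.

Lemma taylor_poly_at_0 c n : taylor_poly c n 0 = c 0%nat.
Proof.
  induction n as [|n IHn]; unfold taylor_poly in *; simpl sum_f_R0.
  - simpl. field.
  - rewrite IHn, Rmult_0_l. unfold Rdiv. ring.
Qed.

Lemma is_derive_monomial c k u :
  is_derive (fun u => c * u ^ S k / INR (fact (S k))) u (c * u ^ k / INR (fact k)).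
Proof.
  auto_derive; auto.
  change (match k with 0%nat => 1 | S _ => INR k + 1 end) with (INR (S k)).
  change (fact k + k * fact k)%nat with (fact (S k)).
  rewrite fact_simpl, mult_INR.
  pose proof (INR_fact_neq_0 k). pose proof (not_0_INR (S k) ltac:(lia)).
  field; auto.
Qed.

Lemma is_derive_taylor_poly c n u :
  is_derive (taylor_poly c (S n)) u (taylor_poly (fun i => c (S i)) n u).
Proof.
  induction n as [|n IHn].
  - unfold taylor_poly; simpl. auto_derive; auto. field.
  - apply (is_derive_plus (taylor_poly c (S n))); [exact IHn | apply is_derive_monomial].
Qed.

Lemma is_derive_taylor_poly_shift c n x s :
  is_derive (fun s => taylor_poly c (S n) (s - x)) s (taylor_poly (fun i => c (S i)) n (s - x)).
Proof.
  rewrite <- (Rmult_1_l (taylor_poly _ n (s - x))).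
  apply (is_derive_comp (taylor_poly c (S n)) (fun s => s - x)); [apply is_derive_taylor_poly|].
  auto_derive; auto; ring.
Qed.

Lemma is_derive_signed_monomial K sg x n :
  sg * sg = 1 ->
  forall s, is_derive (fun s => sg * (K * (sg * (s - x)) ^ S n / INR (fact (S n)))) s
              (K * (sg * (s - x)) ^ n / INR (fact n)).
Proof.
  intros Hsg s.
  replace (K * (sg * (s - x)) ^ n / INR (fact n))
    with (sg * (sg * (K * (sg * (s - x)) ^ n / INR (fact n))))
    by (rewrite <- Rmult_assoc, Hsg; ring).
  apply is_derive_scal.
  apply (is_derive_comp (fun u => K * u ^ S n / INR (fact (S n))) (fun s => sg * (s - x)));
    [apply is_derive_monomial | auto_derive; auto; ring].
Qed.

Lemma taylor_remainder_step phi phi' c n K x t :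
  is_deriv_01 phi phi' -> 0 <= x <= 1 -> 0 <= t <= 1 -> 0 <= K -> c 0%nat = phi x ->
  (forall s, Rmin x t < s < Rmax x t ->
     Rabs (phi' s - taylor_poly (fun i => c (S i)) n (s - x))
       <= K * Rabs (s - x) ^ n / INR (fact n)) ->
  Rabs (phi t - taylor_poly c (S n) (t - x)) <= K * Rabs (t - x) ^ S n / INR (fact (S n)).
Proof.
  intros Hphi Hx Ht HK Hc0 Hb.
  set (sg := if Rle_dec x t then 1 else -1).
  assert (Hsg : Rabs sg = 1 /\ sg * sg = 1).
  { unfold sg; destruct Rle_dec; [rewrite Rabs_R1 | rewrite Rabs_left]; lra. }
  assert (Hsgs : forall s, Rmin x t <= s <= Rmax x t -> sg * (s - x) = Rabs (s - x)).
  { intros s Hs. unfold sg, Rmin, Rmax in *. destruct Rle_dec.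
    - rewrite Rabs_pos_eq; lra.
    - rewrite Rabs_left1; lra. }
  assert (Hbetween : forall s, Rmin x t <= s <= Rmax x t -> 0 <= s <= 1).
  { intros s. unfold Rmin, Rmax. destruct Rle_dec; lra. }
  (* [psi] is [s |-> K |s - x|^(n+1) / (n+1)!] on the segment, made smooth on R. *)
  pose (psi s := sg * (K * (sg * (s - x)) ^ S n / INR (fact (S n)))).
  pose proof (is_derive_signed_monomial K sg x n (proj2 Hsg)) as Hpsi.
  pose (u s := phi s - taylor_poly c (S n) (s - x)).
  assert (Hinc : Rabs (u t - u x) <= Rabs (psi t - psi x)).
  { apply (Rabs_increment_le_of_derive_between u
      (fun s => phi' s - taylor_poly (fun i => c (S i)) n (s - x)) psi
      (fun s => K * (sg * (s - x)) ^ n / INR (fact n))).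
    - intros y Hy. apply continuous_within_minus.
      + apply (continuous_within_subinterval _ _ 0 1).
        * unfold Rmin; destruct Rle_dec; lra.
        * unfold Rmax; destruct Rle_dec; lra.
        * now apply (is_deriv_01_continuous_within _ phi'), Hbetween.
      + eapply is_derive_continuous_within, is_derive_taylor_poly_shift.
    - intros s Hs. apply (is_derive_minus phi); [|apply is_derive_taylor_poly_shift].
      apply is_deriv_01_is_derive; auto.
      pose proof (Hbetween s ltac:(lra)). unfold Rmin, Rmax in Hs; destruct Rle_dec; lra.
    - exact Hpsi.
    - intros s Hs. rewrite Hsgs by lra. now apply Hb. }
  assert (Hux : u x = 0) by (unfold u; now rewrite Rminus_eq_0, taylor_poly_at_0, Hc0, Rminus_eq_0).
  assert (Hpsix : psi x = 0).
  { unfold psi. rewrite Rminus_eq_0, Rmult_0_r, pow_i by lia. unfold Rdiv. ring. }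
  rewrite Hux, Hpsix, !Rminus_0_r in Hinc. unfold u, psi in Hinc.
  rewrite Rabs_mult, (proj1 Hsg), Rmult_1_l, Hsgs in Hinc
    by (unfold Rmin, Rmax; destruct Rle_dec; lra).
  rewrite (Rabs_pos_eq (K * _ / _)) in Hinc; [exact Hinc|].
  apply Rmult_le_pos; [apply Rmult_le_pos; [lra | apply pow_le, Rabs_pos]|].
  left. apply Rinv_0_lt_compat, INR_fact_lt_0.
Qed.

Theorem taylor_remainder_le F G m x h K :
  deriv_chain F G m -> 0 <= x <= 1 -> 0 <= x + h <= 1 ->
  (forall s, Rmin x (x + h) <= s <= Rmax x (x + h) -> Rabs (G m s - G m x) <= K) ->
  Rabs (F (x + h) - taylor_poly (fun i => G i x) m h) <= K * Rabs h ^ m / INR (fact m).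
Proof.
  intros [HG0 HGd] Hx Hxh HK.
  assert (Hseg : forall t, Rmin x (x + h) <= t <= Rmax x (x + h) -> 0 <= t <= 1).
  { intros t. unfold Rmin, Rmax. destruct Rle_dec; lra. }
  assert (Hxseg : Rmin x (x + h) <= x <= Rmax x (x + h)).
  { unfold Rmin, Rmax. destruct Rle_dec; lra. }
  assert (HK0 : 0 <= K) by (eapply Rle_trans; [apply Rabs_pos | apply (HK x Hxseg)]).
  assert (Hind : forall n, (n <= m)%nat -> forall t, Rmin x (x + h) <= t <= Rmax x (x + h) ->
    Rabs (G (m - n)%nat t - taylor_poly (fun i => G (m - n + i)%nat x) n (t - x))
      <= K * Rabs (t - x) ^ n / INR (fact n)).
  { induction n as [|n IHn]; intros Hn t Ht.
    - unfold taylor_poly; simpl. rewrite Nat.sub_0_r, Nat.add_0_r.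
      replace (G m x * 1 / 1) with (G m x) by field.
      replace (K * 1 / 1) with K by field. auto.
    - apply taylor_remainder_step with (phi' := G (S (m - S n))); auto.
      + apply HGd. lia.
      + now rewrite Nat.add_0_r.
      + intros s Hs.
        assert (Hs' : Rmin x (x + h) <= s <= Rmax x (x + h)).
        { revert Hs Ht. unfold Rmin, Rmax. repeat destruct Rle_dec; lra. }
        replace (S (m - S n)) with (m - n)%nat by lia.
        rewrite (taylor_poly_ext _ (fun i => G (m - n + i)%nat x)) by (intros i _; f_equal; lia).
        now apply IHn; [lia|]. }
  specialize (Hind m (le_n m) (x + h)).
  rewrite Nat.sub_diag, Rplus_minus_l in Hind. rewrite <- (HG0 (x + h) Hxh).
  apply Hind. unfold Rmin, Rmax. destruct Rle_dec; lra.
Qed.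

(** * The increment estimate *)

Lemma le_of_ln_le u v : 0 < u -> 0 < v -> ln u <= ln v -> u <= v.
Proof.
  intros Hu Hv H. destruct (Rle_or_lt u v) as [|Hlt]; auto.
  pose proof (ln_increasing v u Hv Hlt). lra.
Qed.

Lemma taylor_poly_increment_le c m h a y :
  (forall j, (1 <= j <= m)%nat -> Rabs (c j) * Rabs h ^ j <= a ^ j * y) ->
  Rabs (taylor_poly c m h - c 0%nat) <= y * (sum_f_R0 (fun i => a ^ i / INR (fact i)) m - 1).
Proof.
  intros Hc. induction m as [|m IHm].
  - unfold taylor_poly; simpl. replace (c 0%nat * 1 / 1 - c 0%nat) with 0 by field.
    rewrite Rabs_R0. lra.
  - unfold taylor_poly in *. rewrite !tech5.
    assert (Hf : 0 < / INR (fact (S m))) by apply Rinv_0_lt_compat, INR_fact_lt_0.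
    assert (Hterm : Rabs (c (S m) * h ^ S m / INR (fact (S m))) <= a ^ S m * y / INR (fact (S m))).
    { unfold Rdiv. rewrite !Rabs_mult, <- RPow_abs, (Rabs_pos_eq (/ _)) by lra.
      apply Rmult_le_compat_r; [lra | apply Hc; lia]. }
    specialize (IHm ltac:(intros j Hj; apply Hc; lia)).
    rewrite Rplus_minus_swap.
    eapply Rle_trans; [apply Rabs_triang|].
    unfold Rdiv in *. lra.
Qed.

Lemma ln_le_of_step_bound beta a N y h :
  0 < beta -> 0 < a -> 0 < N -> 0 < y -> h <> 0 ->
  Rabs h <= a * Rpower (y / N) (/ beta) ->
  beta * ln (Rabs h) <= beta * ln a + ln y - ln N.
Proof.
  intros Hb Ha HN Hy Hh H.
  assert (HP : 0 < Rpower (y / N) (/ beta)) by apply exp_pos.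
  apply ln_le in H; [|now apply Rabs_pos_lt].
  rewrite ln_mult, ln_Rpower, ln_div in H by auto.
  apply Rmult_le_compat_l with (r := beta) in H; [|lra].
  replace (beta * (ln a + / beta * (ln y - ln N))) with (beta * ln a + ln y - ln N) in H
    by (field; lra).
  exact H.
Qed.

Lemma Holder_remainder_le beta m a N y h :
  0 < a -> 0 < N -> 0 < y -> h <> 0 ->
  beta * ln (Rabs h) <= beta * ln a + ln y - ln N ->
  N * Rpower (Rabs h) (beta - INR m) * Rabs h ^ m <= Rpower a beta * y.
Proof.
  intros Ha HN Hy Hh HL.
  assert (Hh' : 0 < Rabs h) by now apply Rabs_pos_lt.
  assert (HP : 0 < Rpower (Rabs h) (beta - INR m)) by apply exp_pos.
  assert (HPa : 0 < Rpower a beta) by apply exp_pos.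
  apply le_of_ln_le.
  - apply Rmult_lt_0_compat; [now apply Rmult_lt_0_compat | now apply pow_lt].
  - now apply Rmult_lt_0_compat.
  - rewrite !ln_mult, ln_pow, !ln_Rpower; auto.
    + lra.
    + now apply Rmult_lt_0_compat.
    + now apply pow_lt.
Qed.

Lemma derivative_term_le beta j a N y h g :
  0 < beta -> 0 < a -> 0 < N -> 0 < y -> h <> 0 -> g <> 0 ->
  beta * ln (Rabs h) <= beta * ln a + ln y - ln N ->
  Rpower (Rabs g) beta <= Rpower N (INR j) * Rpower y (beta - INR j) ->
  Rabs g * Rabs h ^ j <= a ^ j * y.
Proof.
  intros Hb Ha HN Hy Hh Hg HL Hgb.
  assert (Hh' : 0 < Rabs h) by now apply Rabs_pos_lt.
  assert (Hg' : 0 < Rabs g) by now apply Rabs_pos_lt.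
  assert (HPN : 0 < Rpower N (INR j)) by apply exp_pos.
  assert (HPy : 0 < Rpower y (beta - INR j)) by apply exp_pos.
  apply ln_le in Hgb; [|apply exp_pos].
  rewrite ln_mult, !ln_Rpower in Hgb by auto.
  apply le_of_ln_le.
  - apply Rmult_lt_0_compat; [lra | now apply pow_lt].
  - apply Rmult_lt_0_compat; [now apply pow_lt | lra].
  - rewrite !ln_mult, !ln_pow by (auto; now apply pow_lt).
    apply (Rmult_le_reg_l beta); [lra|].
    assert (Hj : INR j * (beta * ln (Rabs h)) <= INR j * (beta * ln a + ln y - ln N))
      by (apply Rmult_le_compat_l; [apply pos_INR | exact HL]).
    nra.
Qed.

Lemma increment_le_half F G m beta a N x h :
  0 < beta -> INR m < beta -> deriv_chain F G m ->
  0 <= x <= 1 -> 0 <= x + h <= 1 -> 0 < a -> 0 < N -> 0 < F x ->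
  Rabs h <= a * Rpower (F x / N) (/ beta) ->
  (forall s, 0 <= s <= 1 -> s <> x ->
     Rabs (G m s - G m x) <= N * Rpower (Rabs (s - x)) (beta - INR m)) ->
  (forall j, (1 <= j <= m)%nat -> G j x <> 0 ->
     Rpower (Rabs (G j x)) beta <= Rpower N (INR j) * Rpower (F x) (beta - INR j)) ->
  exp a - 1 + Rpower a beta / INR (fact m) <= 1 / 2 ->
  Rabs (F (x + h) - F x) <= 1 / 2 * F x.
Proof.
  intros Hb Hm Hch Hx Hxh Ha HN Hy Hh HHol HHterm Ha_small.
  destruct (Req_dec h 0) as [->|Hh0].
  { rewrite Rplus_0_r, Rminus_eq_0, Rabs_R0. lra. }
  set (y := F x) in *.
  pose proof (ln_le_of_step_bound beta a N y h Hb Ha HN Hy Hh0 Hh) as HL.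
  set (K := N * Rpower (Rabs h) (beta - INR m)).
  assert (Hrem : Rabs (F (x + h) - taylor_poly (fun i => G i x) m h)
                 <= Rpower a beta * y / INR (fact m)).
  { eapply Rle_trans.
    - apply (taylor_remainder_le F G m x h K Hch Hx Hxh).
      intros s Hs. destruct (Req_dec s x) as [->|Hne].
      + rewrite Rminus_eq_0, Rabs_R0. left. apply Rmult_lt_0_compat; [lra | apply exp_pos].
      + assert (Hs01 : 0 <= s <= 1) by (unfold Rmin, Rmax in Hs; destruct Rle_dec; lra).
        eapply Rle_trans; [now apply HHol|].
        apply Rmult_le_compat_l; [lra|].
        apply Rle_Rpower_l; [lra|]. split; [apply Rabs_pos_lt; lra|].
        unfold Rmin, Rmax in Hs; destruct Rle_dec; unfold Rabs; repeat destruct Rcase_abs; lra.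
    - unfold Rdiv. apply Rmult_le_compat_r; [left; apply Rinv_0_lt_compat, INR_fact_lt_0|].
      now apply Holder_remainder_le. }
  assert (Hpoly : Rabs (taylor_poly (fun i => G i x) m h - y) <= y * (exp a - 1)).
  { assert (Hc0 : G 0%nat x = y) by now apply Hch.
    rewrite <- Hc0 at 1.
    eapply Rle_trans.
    - apply (taylor_poly_increment_le (fun i => G i x) m h a y). intros j Hj.
      destruct (Req_dec (G j x) 0) as [Hz|Hnz].
      + rewrite Hz, Rabs_R0, Rmult_0_l. apply Rmult_le_pos; [apply pow_le|]; lra.
      + now apply (derivative_term_le beta j a N y h), HHterm.
    - pose proof (exp_ge_taylor a m ltac:(lra)). apply Rmult_le_compat_l; lra. }
  replace (F (x + h) - y)
    with ((F (x + h) - taylor_poly (fun i => G i x) m h) + (taylor_poly (fun i => G i x) m h - y))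
    by ring.
  eapply Rle_trans; [apply Rabs_triang|].
  assert (y * (exp a - 1 + Rpower a beta / INR (fact m)) <= y * (1 / 2))
    by (apply Rmult_le_compat_l; lra).
  unfold Rdiv in *. lra.
Qed.

(** * Bounds extracted from the H_B^beta norm *)

Lemma Lub_Rbar_ge (P : R -> Prop) r : P r -> Rbar_le r (Lub_Rbar P).
Proof. intros H. now apply (proj1 (Lub_Rbar_correct P)). Qed.

Lemma Rbar_maxb_ge_l u v : Rbar_le u (Rbar_maxb u v).
Proof. unfold Rbar_maxb. destruct excluded_middle_informative; auto. apply Rbar_le_refl. Qed.

Lemma Rbar_maxb_ge_r u v : Rbar_le v (Rbar_maxb u v).
Proof.
  unfold Rbar_maxb. destruct excluded_middle_informative; [apply Rbar_le_refl|].
  now apply Rbar_lt_le, Rbar_not_le_lt.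
Qed.

Lemma fold_Rbar_maxb_ge l u : In u l -> Rbar_le u (fold_right Rbar_maxb (Finite 0) l).
Proof.
  induction l as [|v l IHl]; simpl; [tauto|]. intros [->|H]; [apply Rbar_maxb_ge_l|].
  eapply Rbar_le_trans; [apply IHl, H | apply Rbar_maxb_ge_r].
Qed.

Lemma fold_Rbar_maxb_nonneg l : Rbar_le (Finite 0) (fold_right Rbar_maxb (Finite 0) l).
Proof.
  induction l as [|v l IHl]; [apply Rle_refl|].
  simpl fold_right. eapply Rbar_le_trans; [apply IHl | apply Rbar_maxb_ge_r].
Qed.

Lemma Rbar_plus_nonneg u v :
  Rbar_le (Finite 0) u -> Rbar_le (Finite 0) v -> Rbar_le (Finite 0) (Rbar_plus u v).
Proof. intros Hu Hv. rewrite <- (Rbar_plus_0_r (Finite 0)). now apply Rbar_plus_le_compat. Qed.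

Lemma Rbar_le_plus_l u v : Rbar_le (Finite 0) v -> Rbar_le u (Rbar_plus u v).
Proof.
  intros Hv. rewrite <- (Rbar_plus_0_r u) at 1.
  apply Rbar_plus_le_compat; [apply Rbar_le_refl | exact Hv].
Qed.

Lemma Rbar_le_plus_r u v : Rbar_le (Finite 0) u -> Rbar_le v (Rbar_plus u v).
Proof. intros Hu. rewrite Rbar_plus_comm. now apply Rbar_le_plus_l. Qed.

Lemma sup01_nonneg F : (forall x, 0 <= F x) -> Rbar_le (Finite 0) (sup01 F).
Proof.
  intros H. eapply Rbar_le_trans; [|apply Lub_Rbar_ge; exists 0; split; [lra | reflexivity]].
  apply H.
Qed.

Lemma H_seminorm_nonneg beta m G : Rbar_le (Finite 0) (H_seminorm beta m G).
Proof. apply fold_Rbar_maxb_nonneg. Qed.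

Lemma Holder_quotient_le_Cbeta_norm beta m D s t :
  0 <= s <= 1 -> 0 <= t <= 1 -> s <> t ->
  Rbar_le (Rabs (D m s - D m t) / Rpower (Rabs (s - t)) (beta - INR m)) (Cbeta_norm beta m D).
Proof.
  intros Hs Ht Hst. unfold Cbeta_norm.
  eapply Rbar_le_trans; [|apply Rbar_le_plus_r, sup01_nonneg; intros; apply Rabs_pos].
  eapply Rbar_le_trans; [|apply Rbar_le_plus_r, sup01_nonneg; intros; apply Rabs_pos].
  apply Lub_Rbar_ge. now exists s, t.
Qed.

Lemma Cbeta_norm_nonneg beta m D : Rbar_le (Finite 0) (Cbeta_norm beta m D).
Proof.
  eapply Rbar_le_trans; [|apply (Holder_quotient_le_Cbeta_norm beta m D 0 1); lra].
  simpl. apply Rdiv_le_0_compat; [apply Rabs_pos | apply exp_pos].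
Qed.

Lemma Cbeta_norm_le_HB_norm beta m D E : Rbar_le (Cbeta_norm beta m D) (HB_norm beta m D E).
Proof.
  apply Rbar_le_plus_l, Rbar_plus_nonneg; apply H_seminorm_nonneg.
Qed.

Lemma H_seminorm_l_le_HB_norm beta m D E : Rbar_le (H_seminorm beta m D) (HB_norm beta m D E).
Proof.
  eapply Rbar_le_trans; [|apply Rbar_le_plus_r, Cbeta_norm_nonneg].
  apply Rbar_le_plus_l, H_seminorm_nonneg.
Qed.

Lemma H_seminorm_r_le_HB_norm beta m D E : Rbar_le (H_seminorm beta m E) (HB_norm beta m D E).
Proof.
  eapply Rbar_le_trans; [|apply Rbar_le_plus_r, Cbeta_norm_nonneg].
  apply Rbar_le_plus_r, H_seminorm_nonneg.
Qed.

Lemma Holder_le_of_Cbeta_norm_le beta m D N s t :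
  Rbar_le (Cbeta_norm beta m D) (Finite N) -> 0 <= s <= 1 -> 0 <= t <= 1 -> s <> t ->
  Rabs (D m s - D m t) <= N * Rpower (Rabs (s - t)) (beta - INR m).
Proof.
  intros HN Hs Ht Hst.
  assert (HP : 0 < Rpower (Rabs (s - t)) (beta - INR m)) by apply exp_pos.
  pose proof (Rbar_le_trans _ _ _ (Holder_quotient_le_Cbeta_norm beta m D s t Hs Ht Hst) HN)
    as Hq; simpl in Hq.
  apply Rmult_le_compat_r with (r := Rpower (Rabs (s - t)) (beta - INR m)) in Hq; [|lra].
  unfold Rdiv in Hq. rewrite Rmult_assoc, Rinv_l, Rmult_1_r in Hq by lra. exact Hq.
Qed.

Lemma rpow_Rpower u e : u <> 0 -> rpow u e = Rpower u e.
Proof. intros Hu. unfold rpow. now destruct Req_EM_T. Qed.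

Lemma Hterm_le_of_H_seminorm_le beta m G N x j :
  Rbar_le (H_seminorm beta m G) (Finite N) -> 0 <= x <= 1 -> 0 < G 0%nat x ->
  (1 <= j <= m)%nat -> G j x <> 0 ->
  Rpower (Rabs (G j x)) beta <= Rpower N (INR j) * Rpower (G 0%nat x) (beta - INR j).
Proof.
  intros HH Hx HG0 Hj HGj.
  assert (Hroot : Rbar_le (Rbar_root (Hterm_sup beta G j) j) (Finite N)).
  { eapply Rbar_le_trans; [|exact HH].
    apply fold_Rbar_maxb_ge, (in_map (fun j => Rbar_root (Hterm_sup beta G j) j)), in_seq. lia. }
  unfold Hterm_sup in Hroot.
  destruct excluded_middle_informative as [_|_]; [contradiction|].
  remember (Lub_Rbar _) as s eqn:Hs in Hroot.
  set (r := Rpower (Rabs (G j x)) beta / Rpower (G 0%nat x) (beta - INR j)).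
  assert (Hr : Rbar_le r s).
  { rewrite Hs. apply Lub_Rbar_ge. right. exists x. split; [exact Hx|]. split; [lra|].
    unfold r. rewrite (Rabs_pos_eq (G 0%nat x)), !rpow_Rpower by (try apply Rabs_no_R0; lra).
    reflexivity. }
  assert (HPr : 0 < Rpower (G 0%nat x) (beta - INR j)) by apply exp_pos.
  assert (Hr0 : 0 < r) by (apply Rdiv_lt_0_compat; [apply exp_pos | exact HPr]).
  destruct s as [s| |]; simpl in Hroot, Hr; try contradiction.
  rewrite rpow_Rpower in Hroot by lra.
  assert (HjR : 0 < INR j) by (apply lt_0_INR; lia).
  assert (Hsj : Rpower (Rpower s (/ INR j)) (INR j) <= Rpower N (INR j))
    by (apply Rle_Rpower_l; [lra | split; [apply exp_pos | exact Hroot]]).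
  rewrite Rpower_mult, Rinv_l, Rpower_1 in Hsj by lra.
  apply Rmult_le_compat_r with (r := Rpower (G 0%nat x) (beta - INR j)) in Hr; [|lra].
  unfold r, Rdiv in Hr. rewrite Rmult_assoc, Rinv_l, Rmult_1_r in Hr by lra.
  eapply Rle_trans; [exact Hr|]. apply Rmult_le_compat_r; lra.
Qed.

Lemma increment_le_half_min beta m f D E a N x h :
  0 < beta -> INR m < beta -> (forall z, 0 <= z <= 1 -> 0 <= f z <= 1) ->
  deriv_chain f D m -> deriv_chain (fun z => 1 - f z) E m -> 0 <= N ->
  (forall s t, 0 <= s <= 1 -> 0 <= t <= 1 -> s <> t ->
     Rabs (D m s - D m t) <= N * Rpower (Rabs (s - t)) (beta - INR m)) ->
  Rbar_le (H_seminorm beta m D) (Finite N) -> Rbar_le (H_seminorm beta m E) (Finite N) ->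
  0 < a -> exp a - 1 + Rpower a beta / INR (fact m) <= 1 / 2 ->
  0 <= x <= 1 -> 0 <= x + h <= 1 ->
  Rabs h <= a * rpow (Rmin (f x) (1 - f x) / N) (/ beta) ->
  Rabs (f (x + h) - f x) <= 1 / 2 * Rmin (f x) (1 - f x).
Proof.
  intros Hb Hm Hf HD HE HN HHol HHD HHE Ha Ha_small Hx Hxh Hh.
  pose proof (Hf x Hx) as Hfx.
  destruct (Req_dec h 0) as [->|Hh0].
  { rewrite Rplus_0_r, Rminus_eq_0, Rabs_R0. apply Rmult_le_pos; [lra|].
    apply Rmin_glb; lra. }
  assert (Hq : Rmin (f x) (1 - f x) / N <> 0).
  { intros Hq. rewrite Hq in Hh. unfold rpow in Hh.
    destruct Req_EM_T; [|contradiction]. pose proof (Rabs_pos_lt h Hh0). lra. }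
  rewrite rpow_Rpower in Hh by exact Hq.
  assert (HNpos : 0 < N).
  { destruct HN as [|HN0]; [assumption|]. rewrite <- HN0, Rdiv_0_r in Hq. contradiction. }
  assert (Hg : 0 < Rmin (f x) (1 - f x)).
  { assert (Hg0 : 0 <= Rmin (f x) (1 - f x)) by (apply Rmin_glb; lra).
    destruct Hg0 as [|Hg0]; [assumption|]. rewrite <- Hg0, Rdiv_0_l in Hq. contradiction. }
  destruct (Rle_dec (f x) (1 - f x)) as [Hle|Hlt].
  - rewrite Rmin_left in * by exact Hle.
    apply (increment_le_half f D m beta a N x h Hb Hm HD Hx Hxh Ha HNpos Hg Hh);
      [| |exact Ha_small].
    + intros s Hs Hsx. now apply HHol.
    + destruct HD as [HD0 _]. intros j Hj Hj0. rewrite <- (HD0 x Hx).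
      apply Hterm_le_of_H_seminorm_le with (m := m); auto. rewrite HD0; lra.
  - rewrite Rmin_right in * by lra.
    destruct (deriv_chain_one_minus f D E m HD HE m (le_n m)) as [c Hc].
    replace (f (x + h) - f x) with (- ((1 - f (x + h)) - (1 - f x))) by ring.
    rewrite Rabs_Ropp.
    apply (increment_le_half (fun z => 1 - f z) E m beta a N x h Hb Hm HE Hx Hxh Ha HNpos Hg Hh);
      [| |exact Ha_small].
    + intros s Hs Hsx. rewrite !Hc by auto.
      replace (c - D m s - (c - D m x)) with (- (D m s - D m x)) by ring.
      rewrite Rabs_Ropp. now apply HHol.
    + destruct HE as [HE0 _]. intros j Hj Hj0. rewrite <- (HE0 x Hx).
      apply Hterm_le_of_H_seminorm_le with (m := m); auto. rewrite HE0; lra.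
Qed.

Lemma mul_one_minus_bounds u v :
  0 <= v <= 1 -> Rabs (u - v) <= 1 / 2 * Rmin v (1 - v) ->
  1 / 4 * (v * (1 - v)) <= u * (1 - u) /\ u * (1 - u) <= 9 / 4 * (v * (1 - v)).
Proof.
  intros Hv Huv. apply Rabs_le_between in Huv.
  pose proof (Rmin_l v (1 - v)). pose proof (Rmin_r v (1 - v)).
  split.
  - apply Rle_trans with ((v / 2) * ((1 - v) / 2)); [lra|].
    apply Rmult_le_compat; lra.
  - apply Rle_trans with ((3 * v / 2) * (3 * (1 - v) / 2)); [|lra].
    apply Rmult_le_compat; lra.
Qed.

Theorem lemmaB4 (beta : R) (m : nat) (f : R -> R) (D E : nat -> R -> R) (a : R) :
  0 < beta ->
  INR m < beta <= INR m + 1 ->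
  (forall x, 0 <= x <= 1 -> 0 <= f x <= 1) ->
  deriv_chain f D m ->
  deriv_chain (fun x => 1 - f x) E m ->
  is_finite (HB_norm beta m D E) ->
  0 < a ->
  (exp a - 1) + Rpower a beta / INR (fact m) <= 1 / 2 ->
  forall x h, 0 <= x <= 1 -> 0 <= x + h <= 1 ->
  Rabs h <= a * rpow (Rmin (f x) (1 - f x) / real (HB_norm beta m D E)) (/ beta) ->
  Rabs (f (x + h) - f x) = Rabs ((1 - f x) - (1 - f (x + h))) /\
  Rabs (f (x + h) - f x) <= 1 / 2 * Rmin (f x) (1 - f x) /\
  1 / 4 * (f x * (1 - f x)) <= f (x + h) * (1 - f (x + h)) /\
  f (x + h) * (1 - f (x + h)) <= 9 / 4 * (f x * (1 - f x)).
Proof.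
  intros Hb [Hm _] Hf HD HE Hfin Ha Ha_small x h Hx Hxh Hh.
  set (N := real (HB_norm beta m D E)) in Hh.
  assert (HBN : HB_norm beta m D E = Finite N) by exact (eq_sym Hfin).
  assert (HN : 0 <= N).
  { pose proof (Rbar_le_trans _ _ _ (Cbeta_norm_nonneg beta m D)
                  (Cbeta_norm_le_HB_norm beta m D E)) as HN.
    now rewrite HBN in HN. }
  assert (Hinc : Rabs (f (x + h) - f x) <= 1 / 2 * Rmin (f x) (1 - f x)).
  { apply (increment_le_half_min beta m f D E a N); auto.
    - intros s t Hs Ht Hst. apply Holder_le_of_Cbeta_norm_le; auto.
      rewrite <- HBN. apply Cbeta_norm_le_HB_norm.
    - rewrite <- HBN. apply H_seminorm_l_le_HB_norm.
    - rewrite <- HBN. apply H_seminorm_r_le_HB_norm. }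
  split; [f_equal; ring|].
  split; [exact Hinc|].
  apply mul_one_minus_bounds; auto.
Qed.
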